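(* Let $A\times_{(\alpha,\beta)}B$ and $A'\times_{(\alpha',\beta')}B'$ be knit products of groups and let $f:A\to A'$, $g:B\to B'$, $\varphi:B\to A'$, $\psi:A\to B'$ be maps such that for all $a,a_1,a_2\in A$ and $b,b_1,b_2\in B$: (f) $\varphi(b_1b_2)=\varphi(b_1)\,\alpha'_{g(b_1)}(\varphi(b_2))$ and $\psi(a_1a_2)=\beta'^{f(a_2)}(\psi(a_1))\,\psi(a_2)$; (g) $f(a_1a_2)=f(a_1)\,\alpha'_{\psi(a_1)}(f(a_2))$ and $g(b_1b_2)=\beta'^{\varphi(b_2)}(g(b_1))\,g(b_2)$; (h) $f(\alpha_{b}(a))\,\alpha'_{\psi(\alpha_{b}(a))}\bigl(\varphi(\beta^{a}(b))\bigr)=\varphi(b)\,\alpha'_{g(b)}(f(a))$ and $\beta'^{\varphi(\beta^{a}(b))}\bigl(\psi(\alpha_{b}(a))\bigr)\,g(\beta^{a}(b))=\beta'^{f(a)}(g(b))\,\psi(a)$. Define $\Phi=(\Phi_1,\Phi_2):A\times_{(\alpha,\beta)}B\to A'\times_{(\alpha',\beta')}B'$ by $$\Phi_1(a,b)=f(a)\,\alpha'_{\psi(a)}(\varphi(b)),\qquad \Phi_2(a,b)=\beta'^{\varphi(b)}(\psi(a))\,g(b).$$ Then $\Phi$ is a group homomorphism. Moreover, if $f$ and $g$ are group homomorphisms, condition (g) may be replaced by: $f(a_2)=\alpha'_{\psi(a_1)}(f(a_2))$ and $g(b_1)=\beta'^{\varphi(b_2)}(g(b_1))$ for all $a_1,a_2\in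 A$, $b_1,b_2\in B$.
   Context: For groups $A$, $B$ (units denoted $e$), an automorphically knitted pair of actions $(\alpha,\beta)$ for $(A,B)$ consists of maps $\alpha:B\times A\to A$ and $\beta:B\times A\to B$, written $\alpha_b(a):=\alpha(b,a)$ and $\beta^a(b):=\beta(b,a)$, such that: (1) each $\alpha_b$ is a bijection of $A$, $\alpha_{b_1}\circ\alpha_{b_2}=\alpha_{b_1b_2}$, $\alpha_e=\mathrm{Id}_A$; (2) each $\beta^a$ is a bijection of $B$, $\beta^{a_1}\circ\beta^{a_2}=\beta^{a_2a_1}$, $\beta^e=\mathrm{Id}_B$; (3) $\alpha_b(a_1a_2)=\alpha_b(a_1)\,\alpha_{\beta^{a_1}(b)}(a_2)$; (4) $\beta^a(b_1b_2)=\beta^{\alpha_{b_2}(a)}(b_1)\,\beta^a(b_2)$. The knit product $A\times_{(\alpha,\beta)}B$ is the group on the set $A\times B$ with multiplication $(a_1,b_1)\cdot(a_2,b_2)=(a_1\alpha_{b_1}(a_2),\ \beta^{a_2}(b_1)b_2)$; likewise $A'\times_{(\alpha',\beta')}B'$ for an automorphically knitted pair $(\alpha',\beta')$ for groups $(A',B')$, with $\alpha'_{b'}(a')=\alpha'(b',a')$, $\beta'^{a'}(b')=\beta'(b',a')$. *)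

From HB Require Import structures.
From mathcomp Require Import all_boot.
Set Implicit Arguments. Unset Strict Implicit. Unset Printing Implicit Defensive.
Local Open Scope group_scope.

(* Groups are MathComp [groupType]s (monoid.v), not necessarily finite.
   al b a  stands for  alpha_b(a) = alpha(b,a)  ([al : B -> A -> A]);
   be b a  stands for  beta^a(b)  = beta(b,a)   ([be : B -> A -> B]). *)

Definition knitted_pair (A B : groupType) (al : B -> A -> A) (be : B -> A -> B) : Prop :=
  (forall b, bijective (al b)) /\
      (forall b1 b2 a, al b1 (al b2 a) = al (b1 * b2) a) /\
      (forall a, al 1 a = a) /\
      (forall a, bijective (fun b => be b a)) /\
      (forall a1 a2 b, be (be b a2) a1 = be b (a2 * a1)) /\
      (forall b, be b 1 = b) /\
      (forall b a1 a2, al b (a1 * a2) = al b a1 * al (be b a1) a2)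
    /\ (forall a b1 b2, be (b1 * b2) a = be b1 (al b2 a) * be b2 a).

Definition knit_mul (A B : groupType) (al : B -> A -> A) (be : B -> A -> B)
  (x y : A * B) : A * B :=
  (x.1 * al x.2 y.1, be x.2 y.1 * y.2).

Definition knit_Phi (A B A' B' : groupType) (al' : B' -> A' -> A') (be' : B' -> A' -> B')
  (f : A -> A') (g : B -> B') (phi : B -> A') (psi : A -> B') (x : A * B) : A' * B' :=
  (f x.1 * al' (psi x.1) (phi x.2), be' (psi x.1) (phi x.2) * g x.2).

From HB Require Import structures.
From mathcomp Require Import all_boot.
Set Implicit Arguments. Unset Strict Implicit. Unset Printing Implicit Defensive.
Local Open Scope group_scope.

(* Phi(a, b) is the knit product (f a, psi a) * (phi b, g b) in A' x B'.
   Conditions (f) and (g) say that a |-> (f a, psi a) and b |-> (phi b, g b)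
   are multiplicative, and (h) is the exchange law
   (phi b, g b) * (f a, psi a) = (f (al b a), psi (al b a)) * (phi (be b a), g (be b a)),
   mirroring (a1, b1) * (a2, b2) = (a1 * al b1 a2, be b1 a2 * b2) in the source.
   Associativity of the target knit product then makes Phi multiplicative. *)

Lemma knit_mulA (A B : groupType) (al : B -> A -> A) (be : B -> A -> B) :
  knitted_pair al be -> associative (knit_mul al be).
Proof.
move=> [_ [alM [_ [_ [beM [_ [al_mul be_mul]]]]]]] [x1 x2] [y1 y2] [z1 z2].
rewrite /knit_mul /=; congr pair.
  by rewrite al_mul alM mulgA.
by rewrite be_mul beM mulgA.
Qed.

Section KnitProductMorphism.

Variables (A B : groupType) (al : B -> A -> A) (be : B -> A -> B).
Variables (M : Type) (op : M -> M -> M) (F : A -> M) (G : B -> M).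
Hypothesis opA : associative op.
Hypothesis FM : {morph F : a1 a2 / a1 * a2 >-> op a1 a2}.
Hypothesis GM : {morph G : b1 b2 / b1 * b2 >-> op b1 b2}.
Hypothesis GF_exchange : forall a b, op (G b) (F a) = op (F (al b a)) (G (be b a)).

Lemma knit_mul_morph :
  {morph (fun x : A * B => op (F x.1) (G x.2)) : x y /
     knit_mul al be x y >-> op x y}.
Proof.
move=> [a1 b1] [a2 b2]; rewrite /knit_mul /= FM GM.
by rewrite opA -(opA (F a1)) -GF_exchange !opA.
Qed.

End KnitProductMorphism.

Theorem theorem2p5 (A B A' B' : groupType)
  (al : B -> A -> A) (be : B -> A -> B)
  (al' : B' -> A' -> A') (be' : B' -> A' -> B')
  (f : A -> A') (g : B -> B') (phi : B -> A') (psi : A -> B') :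
  knitted_pair al be -> knitted_pair al' be' ->
  (* condition (f) *)
  (forall b1 b2, phi (b1 * b2) = phi b1 * al' (g b1) (phi b2)) ->
  (forall a1 a2, psi (a1 * a2) = be' (psi a1) (f a2) * psi a2) ->
  (* condition (h) *)
  (forall a b, f (al b a) * al' (psi (al b a)) (phi (be b a))
               = phi b * al' (g b) (f a)) ->
  (forall a b, be' (psi (al b a)) (phi (be b a)) * g (be b a)
               = be' (g b) (f a) * psi a) ->
  (* first claim: under (g), Phi is a group homomorphism *)
  ((forall a1 a2, f (a1 * a2) = f a1 * al' (psi a1) (f a2)) ->
   (forall b1 b2, g (b1 * b2) = be' (g b1) (phi b2) * g b2) ->
   forall x y, knit_Phi al' be' f g phi psi (knit_mul al be x y)
               = knit_mul al' be' (knit_Phi al' be' f g phi psi x)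
                                  (knit_Phi al' be' f g phi psi y))
  /\
  (* second claim: if f, g are homomorphisms, (g) may be replaced by (g') *)
  ({morph f : a1 a2 / a1 * a2} -> {morph g : b1 b2 / b1 * b2} ->
   (forall a1 a2, f a2 = al' (psi a1) (f a2)) ->
   (forall b1 b2, g b1 = be' (g b1) (phi b2)) ->
   forall x y, knit_Phi al' be' f g phi psi (knit_mul al be x y)
               = knit_mul al' be' (knit_Phi al' be' f g phi psi x)
                                  (knit_Phi al' be' f g phi psi y)).
Proof.
move=> _ knit' phiM psiM hA hB.
have PhiM : (forall a1 a2, f (a1 * a2) = f a1 * al' (psi a1) (f a2)) ->
    (forall b1 b2, g (b1 * b2) = be' (g b1) (phi b2) * g b2) ->
    {morph knit_Phi al' be' f g phi psi : x y /
       knit_mul al be x y >-> knit_mul al' be' x y}.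
  move=> fM gM.
  apply: (knit_mul_morph (F := fun a => (f a, psi a)) (G := fun b => (phi b, g b))
            (knit_mulA knit')).
  - by move=> a1 a2; rewrite /knit_mul /= fM psiM.
  - by move=> b1 b2; rewrite /knit_mul /= phiM gM.
  - by move=> a b; rewrite /knit_mul /= hA hB.
split; first exact: PhiM.
move=> fM gM f_fix g_fix; apply: PhiM.
- by move=> a1 a2; rewrite fM -f_fix.
- by move=> b1 b2; rewrite gM -g_fix.
Qed.
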